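(* In the 1SDI setting where Alice measures $A_0=\sigma_x$, $A_1=\sigma_y$, Bob measures $B_0=(\sigma_x-\sigma_y)/\sqrt2$, $B_1=(\sigma_x+\sigma_y)/\sqrt2$, and Charlie is a black box, the Svetlichny family $P^V_{SvF}$ ($0<V\le1$) demonstrates tripartite steering if and only if $V>\frac1{\sqrt2}$.
   Context: Outcomes and settings: $a,b,c,x,y,z\in\{0,1\}$. For a qubit observable $O$ with eigenvalues $\pm1$, the measurement has projectors $M_0=(\mathbb 1+O)/2$, $M_1=(\mathbb 1-O)/2$; $M^A_{a|x}$, $M^B_{b|y}$ denote the projectors of $A_x$, $B_y$. Svetlichny family: $P^V_{SvF}(abc|xyz)=\frac{2+(-1)^{a\oplus b\oplus c\oplus xy\oplus yz\oplus xz}\sqrt2\,V}{16}$. 1SDI fully LHS-LHV model: $P(abc|xyz)=\sum_\lambda q_\lambda \mathrm{Tr}(M^A_{a|x}\rho^\lambda_A)\mathrm{Tr}(M^B_{b|y}\rho^\lambda_B)P_\lambda(c|z)$ with probabilities $q_\lambda$, qubit states $\rho^\lambda_A,\rho^\lambda_B$ and arbitrary conditional distributions $P_\lambda(c|z)$. Tripartite steering in the 1SDI scenario: a correlation $P$ demonstrates tripartite steering iff (i) it admits no 1SDI fully LHS-LHV model, and (ii) it certifies entanglement between Charlie and Alice–Bob, i.e. there is no finite $d$, state $\rho^{ABC}=\sum_\lambda r_\lambda\rho^\lambda_{AB}\otimes\rho^\lambda_C$ on $\mathbb C^2\otimes\mathbb C^2\otimes\mathbb C^d$ (separable across the cut $AB|C$)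 and POVMs $\{N_{c|z}\}_c$ on $\mathbb C^d$ with $P(abc|xyz)=\mathrm{Tr}[(M^A_{a|x}\otimes M^B_{b|y}\otimes N_{c|z})\rho^{ABC}]$. *)

(* Complex numbers are modelled by an arbitrary
   numClosedFieldType C (algebraically closed field with conjugation and
   order on its real subfield). *)
From HB Require Import structures.
From mathcomp Require Import all_boot all_order all_algebra.
Set Implicit Arguments. Unset Strict Implicit. Unset Printing Implicit Defensive.
Import Order.TTheory GRing.Theory Num.Theory.
Local Open Scope ring_scope.

Lemma kron_divP m n (i : 'I_(m * n)) : (i %/ n < m)%N.
Proof.
case: n i => [|n] i; first by case: i => i; rewrite muln0.
by rewrite ltn_divLR // ltn_ord.
Qed.

Lemma kron_modP m n (i : 'I_(m * n)) : (i %% n < n)%N.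
Proof.
case: n i => [|n] i; first by case: i => i; rewrite muln0.
by rewrite ltn_mod.
Qed.

(* index (i1, i2) of C^m1 (x) C^m2 is i1 * m2 + i2 *)
Definition kron {R : pzRingType} m1 n1 m2 n2 (A : 'M[R]_(m1, n1))
  (B : 'M[R]_(m2, n2)) : 'M[R]_(m1 * m2, n1 * n2) :=
  \matrix_(i, j) (A (Ordinal (kron_divP i)) (Ordinal (kron_divP j)) *
                  B (Ordinal (kron_modP i)) (Ordinal (kron_modP j))).

Definition adjmx {C : numClosedFieldType} m n (A : 'M[C]_(m, n)) : 'M[C]_(n, m) :=
  (map_mx Num.conj A)^T.

Definition psd {C : numClosedFieldType} n (A : 'M[C]_n) : Prop :=
  A = adjmx A /\ forall v : 'cV[C]_n, 0 <= (adjmx v *m A *m v) 0 0.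

Definition is_state {C : numClosedFieldType} n (rho : 'M[C]_n) : Prop :=
  psd rho /\ \tr rho = 1.

Definition sgn {C : numClosedFieldType} (b : bool) : C := if b then -1 else 1.

Definition sigma_x {C : numClosedFieldType} : 'M[C]_2 :=
  \matrix_(i, j) (if i == j then 0 else 1).
Definition sigma_y {C : numClosedFieldType} : 'M[C]_2 :=
  \matrix_(i, j) (if i == j then 0 else if i == ord0 then - 'i else 'i).

(* projector of outcome a (false = 0, true = 1) of observable O :
   M_a = (1 + (-1)^a O)/2 *)
Definition proj_of {C : numClosedFieldType} (O : 'M[C]_2) (a : bool) : 'M[C]_2 :=
  2^-1 *: (1%:M + sgn a *: O).

Definition obsA {C : numClosedFieldType} (x : bool) : 'M[C]_2 :=
  if x then sigma_y else sigma_x.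
Definition obsB {C : numClosedFieldType} (y : bool) : 'M[C]_2 :=
  (sqrtC 2)^-1 *: (if y then sigma_x + sigma_y else sigma_x - sigma_y).

Definition MA {C : numClosedFieldType} (a x : bool) : 'M[C]_2 := proj_of (obsA x) a.
Definition MB {C : numClosedFieldType} (b y : bool) : 'M[C]_2 := proj_of (obsB y) b.

(* a tripartite correlation P(abc|xyz), argument order a b c x y z *)
Definition corr (C : numClosedFieldType) := bool -> bool -> bool -> bool -> bool -> bool -> C.

Definition PSvF {C : numClosedFieldType} (V : C) : corr C :=
  fun a b c x y z =>
    (2 + sgn (a (+) b (+) c (+) (x && y) (+) (y && z) (+) (x && z)) * sqrtC 2 * V)
    / 16.

(* 1SDI fully LHS-LHV model (finitely many hidden variables lambda : 'I_n) *)
Definition LHS_LHV {C : numClosedFieldType} (P : corr C) : Prop :=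
  exists (n : nat) (q : 'I_n -> C) (rhoA rhoB : 'I_n -> 'M[C]_2)
         (Pc : 'I_n -> bool -> bool -> C),
    (forall l, 0 <= q l) /\ \sum_(l < n) q l = 1 /\
    (forall l, is_state (rhoA l) /\ is_state (rhoB l)) /\
    (forall l c z, 0 <= Pc l c z) /\
    (forall l z, Pc l false z + Pc l true z = 1) /\
    (forall a b c x y z,
        P a b c x y z =
        \sum_(l < n) q l * \tr (MA a x *m rhoA l) * \tr (MB b y *m rhoB l)
                     * Pc l c z).

Definition AB_C_separable_model {C : numClosedFieldType} (P : corr C) : Prop :=
  exists (d n : nat) (r : 'I_n -> C) (rhoAB : 'I_n -> 'M[C]_(2 * 2))
         (rhoC : 'I_n -> 'M[C]_d) (N : bool -> bool -> 'M[C]_d),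
    (forall l, 0 <= r l) /\ \sum_(l < n) r l = 1 /\
    (forall l, is_state (rhoAB l) /\ is_state (rhoC l)) /\
    (forall c z, psd (N c z)) /\
    (forall z, N false z + N true z = 1%:M) /\
    (forall a b c x y z,
        P a b c x y z =
        \tr (kron (kron (MA a x) (MB b y)) (N c z) *m
             \sum_(l < n) (r l *: kron (rhoAB l) (rhoC l)))).

Definition tripartite_steering {C : numClosedFieldType} (P : corr C) : Prop :=
  ~ LHS_LHV P /\ ~ AB_C_separable_model P.

(* Write S(P) for the Svetlichny functional
   sum (-1)^(a+b+c+xy+yz+xz) P(abc|xyz).  Fully LHS-LHV models and models
   separable across AB|C are both mixtures of terms
   Tr[(M^A_{a|x} (x) M^B_{b|y}) rho] g(c|z) with rho a two-qubit state and g a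
   classical response of Charlie.  On such a term S is a convex combination of
   the numbers +-Y_0(rho) +- Y_1(rho), where Y_z are the two halves of S at
   fixed z, and for the given measurements each of them is at most 4: four
   minus it is a sum of diagonal entries of rho and of the quadratic form of
   rho at one vector.  As S(P^V_SvF) = 4 sqrt 2 V, neither model exists when
   V > 1/sqrt 2.  Conversely, for V <= 1/sqrt 2 the equal mixture of the
   states sqrt2 V |phi_u><phi_u| + (1 - sqrt2 V)(|00><00| + |11><11|)/2,
   u = (+-1 +- i)/sqrt 2, in which Charlie outputs the two sign bits of u,
   is an AB|C-separable model of P^V_SvF. *)

From HB Require Import structures.
From mathcomp Require Import all_boot all_order all_algebra ring.
Set Implicit Arguments. Unset Strict Implicit. Unset Printing Implicit Defensive.
Import Order.TTheory GRing.Theory Num.Theory.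
Local Open Scope ring_scope.

Section Kronecker.
Variable R : comPzRingType.

Lemma kron_idx_subproof m n (i : 'I_m) (j : 'I_n) : (i * n + j < m * n)%N.
Proof.
apply: (@leq_trans (i * n + n)); first by rewrite ltn_add2l.
by rewrite -mulSnr leq_mul2r ltn_ord orbT.
Qed.

Definition kron_idx m n (i : 'I_m) (j : 'I_n) : 'I_(m * n) :=
  Ordinal (kron_idx_subproof i j).

Lemma kron_idx_div m n (i : 'I_m) (j : 'I_n) :
  Ordinal (kron_divP (kron_idx i j)) = i.
Proof.
apply: val_inj => /=; have hj := ltn_ord j.
by rewrite divnMDl ?(leq_ltn_trans _ hj) // divn_small // addn0.
Qed.

Lemma kron_idx_mod m n (i : 'I_m) (j : 'I_n) :
  Ordinal (kron_modP (kron_idx i j)) = j.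
Proof. by apply: val_inj; rewrite /= modnMDl modn_small. Qed.

Lemma kron_idx_divmod m n (p : 'I_(m * n)) :
  p = kron_idx (Ordinal (kron_divP p)) (Ordinal (kron_modP p)).
Proof. by apply: val_inj; rewrite /= -divn_eq. Qed.

Lemma eq_kron_idx m n (i i' : 'I_m) (j j' : 'I_n) :
  (kron_idx i j == kron_idx i' j') = (i == i') && (j == j').
Proof.
apply/idP/andP => [/eqP eq_ij|[/eqP -> /eqP ->] //].
have := congr1 (fun p => Ordinal (kron_divP p)) eq_ij.
have := congr1 (fun p => Ordinal (kron_modP p)) eq_ij.
by rewrite /= !kron_idx_div !kron_idx_mod => -> ->; rewrite !eqxx.
Qed.

Lemma big_kron_idx m n (F : 'I_(m * n) -> R) :
  \sum_p F p = \sum_(i < m) \sum_(j < n) F (kron_idx i j).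
Proof.
rewrite pair_big (reindex (fun p : 'I_m * 'I_n => kron_idx p.1 p.2)) //=.
exists (fun p => (Ordinal (kron_divP p), Ordinal (kron_modP p))) => [[i j] _|p _].
  by rewrite /= kron_idx_div kron_idx_mod.
by rewrite -kron_idx_divmod.
Qed.

Lemma kronE m1 n1 m2 n2 (A : 'M[R]_(m1, n1)) (B : 'M[R]_(m2, n2)) i j k l :
  kron A B (kron_idx i k) (kron_idx j l) = A i j * B k l.
Proof. by rewrite mxE !kron_idx_div !kron_idx_mod. Qed.

Lemma mulmx_kron m1 n1 p1 m2 n2 p2 (A : 'M[R]_(m1, n1)) (B : 'M[R]_(m2, n2))
  (A' : 'M[R]_(n1, p1)) (B' : 'M[R]_(n2, p2)) :
  kron A B *m kron A' B' = kron (A *m A') (B *m B').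
Proof.
apply/matrixP => p q; rewrite (kron_idx_divmod p) (kron_idx_divmod q).
rewrite kronE !mxE big_kron_idx big_distrlr /=.
by apply: eq_bigr => a _; apply: eq_bigr => b _; rewrite !kronE; ring.
Qed.

Lemma mxtrace_kron m n (A : 'M[R]_m) (B : 'M[R]_n) :
  \tr (kron A B) = \tr A * \tr B.
Proof.
rewrite /mxtrace big_kron_idx big_distrlr /=.
by apply: eq_bigr => i _; apply: eq_bigr => j _; rewrite kronE.
Qed.

Lemma mxtrace_kron_mulmx m n (A : 'M[R]_m) (B : 'M[R]_n) (M : 'M[R]_(m * n)) :
  \tr (kron A B *m M) =
  \sum_i \sum_j \sum_k \sum_l A i j * B k l * M (kron_idx j l) (kron_idx i k).
Proof.
rewrite /mxtrace big_kron_idx; apply: eq_bigr => i _.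
rewrite [RHS]exchange_big; apply: eq_bigr => k _ /=.
rewrite mxE big_kron_idx; apply: eq_bigr => j _; apply: eq_bigr => l _.
by rewrite kronE.
Qed.

Lemma kron1 m n : kron (1%:M : 'M[R]_m) (1%:M : 'M[R]_n) = 1%:M.
Proof.
apply/matrixP => p q; rewrite (kron_idx_divmod p) (kron_idx_divmod q).
by rewrite kronE !mxE eq_kron_idx; do 2!case: eqP; rewrite ?mulr1 ?mulr0.
Qed.

Section Bilinear.
Variables m1 n1 m2 n2 : nat.
Implicit Types (A : 'M[R]_(m1, n1)) (B : 'M[R]_(m2, n2)).

Lemma kronDl A A' B : kron (A + A') B = kron A B + kron A' B.
Proof. by apply/matrixP => p q; rewrite !mxE mulrDl. Qed.

Lemma kronDr A B B' : kron A (B + B') = kron A B + kron A B'.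
Proof. by apply/matrixP => p q; rewrite !mxE mulrDr. Qed.

Lemma kronZl c A B : kron (c *: A) B = c *: kron A B.
Proof. by apply/matrixP => p q; rewrite !mxE mulrA. Qed.

Lemma kronZr c A B : kron A (c *: B) = c *: kron A B.
Proof. by apply/matrixP => p q; rewrite !mxE mulrCA. Qed.

Lemma kron_suml I (r : seq I) (P : pred I) (F : I -> 'M[R]_(m1, n1)) B :
  kron (\sum_(i <- r | P i) F i) B = \sum_(i <- r | P i) kron (F i) B.
Proof.
apply/matrixP => p q; rewrite !mxE !summxE mulr_suml.
by apply: eq_bigr => i _; rewrite !mxE.
Qed.

Lemma kron_sumr I (r : seq I) (P : pred I) A (F : I -> 'M[R]_(m2, n2)) :
  kron A (\sum_(i <- r | P i) F i) = \sum_(i <- r | P i) kron A (F i).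
Proof.
apply/matrixP => p q; rewrite !mxE !summxE mulr_sumr.
by apply: eq_bigr => i _; rewrite !mxE.
Qed.

End Bilinear.
End Kronecker.

Section PositiveSemidefinite.
Variable C : numClosedFieldType.

Definition ket n (p : 'I_n) : 'cV[C]_n := delta_mx p 0.

Lemma adjmxE m n (A : 'M[C]_(m, n)) i j : adjmx A i j = (A j i)^*.
Proof. by rewrite !mxE. Qed.

Lemma adjmxM m n p (A : 'M[C]_(m, n)) (B : 'M[C]_(n, p)) :
  adjmx (A *m B) = adjmx B *m adjmx A.
Proof. by rewrite /adjmx map_mxM trmx_mul. Qed.

Lemma adjmxK m n (A : 'M[C]_(m, n)) : adjmx (adjmx A) = A.
Proof. by apply/matrixP => i j; rewrite !adjmxE conjCK. Qed.

Lemma adjmxD m n (A B : 'M[C]_(m, n)) : adjmx (A + B) = adjmx A + adjmx B.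
Proof. by apply/matrixP => i j; rewrite !mxE rmorphD. Qed.

Lemma adjmxZ m n c (A : 'M[C]_(m, n)) : adjmx (c *: A) = c^* *: adjmx A.
Proof. by apply/matrixP => i j; rewrite !mxE rmorphM. Qed.

Lemma adjmx_delta m n (i : 'I_m) (j : 'I_n) :
  adjmx (delta_mx i j : 'M[C]_(m, n)) = delta_mx j i.
Proof. by apply/matrixP => a b; rewrite !mxE rmorph_nat andbC. Qed.

Lemma adjmx_kron m1 n1 m2 n2 (A : 'M[C]_(m1, n1)) (B : 'M[C]_(m2, n2)) :
  adjmx (kron A B) = kron (adjmx A) (adjmx B).
Proof.
apply/matrixP => p q; rewrite (kron_idx_divmod p) (kron_idx_divmod q).
by rewrite kronE adjmxE kronE rmorphM !adjmxE.
Qed.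

Lemma adjmx_tr_conj n (A : 'M[C]_n) : adjmx A = (A ^t*)%sesqui.
Proof. by apply/matrixP => i j; rewrite !mxE. Qed.

Definition qform n (A : 'M[C]_n) (v : 'cV[C]_n) : C := (adjmx v *m A *m v) 0 0.

Lemma qformD n (A B : 'M[C]_n) v : qform (A + B) v = qform A v + qform B v.
Proof. by rewrite /qform mulmxDr mulmxDl mxE. Qed.

Lemma qformZ n c (A : 'M[C]_n) v : qform (c *: A) v = c * qform A v.
Proof. by rewrite /qform -scalemxAr -scalemxAl mxE. Qed.

Lemma qform_ket n (A : 'M[C]_n) p q : adjmx (ket p) *m A *m ket q = (A p q)%:M.
Proof.
rewrite adjmx_delta -rowE -colE.
by apply/matrixP => i j; rewrite !ord1 !mxE eqxx.
Qed.

Lemma qform_pair n (A : 'M[C]_n) p q a c :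
  qform A (a *: ket p + c *: ket q) =
  a^* * a * A p p + a^* * c * A p q + c^* * a * A q p + c^* * c * A q q.
Proof.
rewrite /qform adjmxD !adjmxZ !mulmxDl !mulmxDr -!scalemxAl -!scalemxAr.
by rewrite !qform_ket !mxE /= !mulr1n; ring.
Qed.

Lemma ket_mul_adjmx n (p : 'I_n) : ket p *m adjmx (ket p) = delta_mx p p.
Proof. by rewrite adjmx_delta mul_delta_mx. Qed.

Lemma psd_diag_ge0 n (A : 'M[C]_n) p : psd A -> 0 <= A p p.
Proof.
by case=> _ /(_ (ket p)); rewrite qform_ket mxE eqxx mulr1n.
Qed.

Lemma psd_mul_adjmx n (w : 'cV[C]_n) : psd (w *m adjmx w).
Proof.
split; first by rewrite adjmxM adjmxK.
move=> v; rewrite mulmxA -(mulmxA (adjmx v *m w)) mxE big_ord1.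
have -> : (adjmx w *m v) 0 0 = ((adjmx v *m w) 0 0)^*.
  by rewrite -[adjmx w *m v]adjmxK adjmxM adjmxK adjmxE.
exact: mul_conjC_ge0.
Qed.

Lemma psd0 n : psd (0 : 'M[C]_n).
Proof.
split; first by apply/matrixP => i j; rewrite !mxE rmorph0.
by move=> v; rewrite mulmx0 mul0mx mxE.
Qed.

Lemma psdD n (A B : 'M[C]_n) : psd A -> psd B -> psd (A + B).
Proof.
move=> [hA qA] [hB qB]; split; first by rewrite adjmxD -hA -hB.
by move=> v; change (0 <= qform (A + B) v); rewrite qformD addr_ge0 ?qA ?qB.
Qed.

Lemma psdZ n c (A : 'M[C]_n) : 0 <= c -> psd A -> psd (c *: A).
Proof.
move=> c_ge0 [hA qA]; split; first by rewrite adjmxZ geC0_conj // -hA.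
by move=> v; change (0 <= qform (c *: A) v); rewrite qformZ mulr_ge0 ?qA.
Qed.

Lemma psd_sum n I (r : seq I) (P : pred I) (F : I -> 'M[C]_n) :
  (forall i, P i -> psd (F i)) -> psd (\sum_(i <- r | P i) F i).
Proof. by move=> psdF; apply: big_ind => //; [exact: psd0 | exact: psdD]. Qed.

Lemma psd_spectral n (A : 'M[C]_n) : psd A ->
  exists (d : 'I_n -> C) (u : 'I_n -> 'cV[C]_n),
    (forall k, 0 <= d k) /\ A = \sum_k d k *: (u k *m adjmx (u k)).
Proof.
move=> [hA qA].
have /orthomx_spectralP : A \is normalmx by apply/eqP; rewrite -adjmx_tr_conj -hA.
set P := spectralmx A; set D := spectral_diag A.
rewrite invmx_unitary ?spectral_unitarymx // -adjmx_tr_conj => defA.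
have PP : P *m adjmx P = 1%:M.
  by rewrite adjmx_tr_conj; apply/unitarymxP; exact: spectral_unitarymx.
pose u k := adjmx P *m ket k.
have adj_u k : adjmx (u k) = adjmx (ket k) *m P by rewrite adjmxM adjmxK.
have Pu k : P *m u k = ket k by rewrite mulmxA PP mul1mx.
exists (fun k => D 0 k), u; split.
  move=> k; have := qA (u k); rewrite adj_u defA -!mulmxA Pu !mulmxA.
  by rewrite -(mulmxA _ P) PP mulmx1 qform_ket !mxE !eqxx !mulr1n.
rewrite defA diag_mx_sum_delta mulmx_sumr mulmx_suml; apply: eq_bigr => k _.
rewrite adj_u -scalemxAr -scalemxAl; congr (_ *: _).
by rewrite /u !mulmxA -(mulmxA _ (ket k)) ket_mul_adjmx.
Qed.

Lemma mxtrace_mul_rank1 n (M : 'M[C]_n) (w : 'cV[C]_n) :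
  \tr (M *m (w *m adjmx w)) = qform M w.
Proof. by rewrite mulmxA mxtrace_mulC mulmxA /mxtrace big_ord1. Qed.

Lemma mxtrace_mul_psd_ge0 n (M S : 'M[C]_n) : psd M -> psd S -> 0 <= \tr (M *m S).
Proof.
move=> [_ qM] /psd_spectral [d [u [d_ge0 ->]]].
rewrite mulmx_sumr raddf_sum /= sumr_ge0 // => k _.
by rewrite -scalemxAr mxtraceZ mxtrace_mul_rank1; exact: mulr_ge0 (d_ge0 k) (qM (u k)).
Qed.

Lemma psd_kron m n (A : 'M[C]_m) (B : 'M[C]_n) : psd A -> psd B -> psd (kron A B).
Proof.
move=> /psd_spectral [d [u [d_ge0 ->]]] /psd_spectral [e [w [e_ge0 ->]]].
rewrite kron_suml; apply: psd_sum => i _; rewrite kron_sumr; apply: psd_sum => j _.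
rewrite kronZl kronZr scalerA; apply: psdZ; first exact: mulr_ge0.
by rewrite -mulmx_kron -adjmx_kron; exact: psd_mul_adjmx.
Qed.

Lemma mxtrace_mul_ket n (M : 'M[C]_n) p : \tr (M *m (ket p *m adjmx (ket p))) = M p p.
Proof. by rewrite mxtrace_mul_rank1 /qform qform_ket mxE eqxx mulr1n. Qed.

Lemma ket_state n (p : 'I_n) : is_state (ket p *m adjmx (ket p)).
Proof.
split; first exact: psd_mul_adjmx.
by rewrite -[X in \tr X]mul1mx mxtrace_mul_ket mxE eqxx.
Qed.

End PositiveSemidefinite.

Arguments ket {C n} p.

(* Index 1 of ['I_2] is written [lift ord0 ord0], the form produced by
   [big_ord_recl]. *)
Notation i0 := (@ord0 1).
Notation i1 := (lift (@ord0 1) (@ord0 0)).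

Section SvetlichnyBound.
Variable C : numClosedFieldType.
Local Notation sqrt2 := (sqrtC (2 : C)).

Lemma sqrt2_sqr : sqrt2 ^+ 2 = 2. Proof. exact: sqrtCK. Qed.
Lemma sqrt2_gt0 : 0 < sqrt2. Proof. by rewrite sqrtC_gt0 ltr0n. Qed.
Lemma sqrt2_neq0 : sqrt2 != 0. Proof. by rewrite gt_eqF // sqrt2_gt0. Qed.
Lemma sqrt2_conj : sqrt2^* = sqrt2. Proof. by rewrite geC0_conj // ltW // sqrt2_gt0. Qed.

Lemma sgn_conj (e : bool) : (sgn e : C)^* = sgn e.
Proof. by case: e; rewrite /sgn ?conjCN1 ?conjC1. Qed.

Lemma sgn_xor a b : sgn (a (+) b) = sgn a * sgn b :> C.
Proof. by case: a; case: b; rewrite /sgn /= ?mulN1r ?opprK ?mul1r. Qed.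

Definition svet_parity (x y z : bool) := (x && y) (+) (y && z) (+) (x && z).

Definition svet_value (P : corr C) : C :=
  \sum_x \sum_y \sum_z \sum_a \sum_b \sum_c
    sgn (a (+) b (+) c (+) svet_parity x y z) * P a b c x y z.

Definition svet_slice (T : bool -> bool -> bool -> bool -> C) (z : bool) : C :=
  \sum_x \sum_y \sum_a \sum_b sgn (a (+) b (+) svet_parity x y z) * T a b x y.

Definition ab_corr (R : 'M[C]_(2 * 2)) (a b x y : bool) : C :=
  \tr (kron (MA a x) (MB b y) *m R).

Lemma ab_corrE R a b x y : ab_corr R a b x y =
  2^-1 * 2^-1 * (\tr (kron 1%:M 1%:M *m R) + sgn b * \tr (kron 1%:M (obsB y) *m R)
     + sgn a * \tr (kron (obsA x) 1%:M *m R)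
     + sgn a * sgn b * \tr (kron (obsA x) (obsB y) *m R)).
Proof.
rewrite /ab_corr /MA /MB /proj_of kronZl kronZr !kronDl !kronDr !kronZl !kronZr.
by rewrite !scalerA -!scalemxAl !mxtraceZ !mulmxDl !mxtraceD -!scalemxAl !mxtraceZ; ring.
Qed.

(* Only the full correlator survives the signed sum over the outcomes a, b. *)
Lemma svet_slice_obs R z : svet_slice (ab_corr R) z =
  \sum_x \sum_y sgn (svet_parity x y z) * \tr (kron (obsA x) (obsB y) *m R).
Proof.
have two_neq0 : (2 : C) != 0 by rewrite pnatr_eq0.
apply: eq_bigr => x _; apply: eq_bigr => y _.
by rewrite !big_bool !ab_corrE; case: svet_parity; rewrite /sgn /=; field.
Qed.

Lemma mxtrace4 (R : 'M[C]_(2 * 2)) : \tr R =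
  R (kron_idx i0 i0) (kron_idx i0 i0) + R (kron_idx i0 i1) (kron_idx i0 i1) +
  R (kron_idx i1 i0) (kron_idx i1 i0) + R (kron_idx i1 i1) (kron_idx i1 i1).
Proof. by rewrite /mxtrace big_kron_idx !big_ord_recl !big_ord0 /=; ring. Qed.

Definition obs_form (j q a b c d : C) (x y : bool) : C :=
    (if x then -j else 1) * (q^-1 * (if y then 1 - j else 1 + j)) * a
  + (if x then -j else 1) * (q^-1 * (if y then 1 + j else 1 - j)) * b
  + (if x then j else 1) * (q^-1 * (if y then 1 - j else 1 + j)) * c
  + (if x then j else 1) * (q^-1 * (if y then 1 + j else 1 - j)) * d.

Lemma mxtrace_obs_kron (R : 'M[C]_(2 * 2)) x y :
  \tr (kron (obsA x) (obsB y) *m R) =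
  obs_form 'i sqrt2
    (R (kron_idx i1 i1) (kron_idx i0 i0)) (R (kron_idx i1 i0) (kron_idx i0 i1))
    (R (kron_idx i0 i1) (kron_idx i1 i0)) (R (kron_idx i0 i0) (kron_idx i1 i1)) x y.
Proof.
rewrite mxtrace_kron_mulmx !big_ord_recl !big_ord0 /obs_form.
by case: x; case: y; rewrite /obsA /obsB /sigma_x /sigma_y !mxE /=; ring.
Qed.

(* [4 - (+-Y_0 +- Y_1)] as a sum of nonnegative terms, stated over
   abstract [j], [q] with [j^2 = -1] and [q^2 = 2] so that [field] decides it;
   the first summand is the quadratic form of [R] at [q|00> + c|11>]. *)
Lemma svet_slices_sos (j q a b c d r00 r01 r10 r11 : C) (e0 e1 : bool) :
  j ^+ 2 = -1 -> q ^+ 2 = 2 -> q != 0 ->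
  4 - (sgn e0 * (\sum_x \sum_y sgn (svet_parity x y false) * obs_form j q a b c d x y)
     + sgn e1 * (\sum_x \sum_y sgn (svet_parity x y true) * obs_form j q a b c d x y))
  = 2 * (q * q * r00 + q * (- (sgn e0 - j * sgn e1)) * d
         + (- (sgn e0 + j * sgn e1)) * q * a
         + (- (sgn e0 + j * sgn e1)) * (- (sgn e0 - j * sgn e1)) * r11)
    + 4 * r01 + 4 * r10 + 4 * (1 - (r00 + r01 + r10 + r11)).
Proof.
move=> j2 q2 q_neq0.
by case: e0; case: e1; rewrite /svet_parity /obs_form !big_bool /sgn /=; field: j2 q2.
Qed.

Lemma svet_slices_le4 (R : 'M[C]_(2 * 2)) (e0 e1 : bool) : is_state R ->
  sgn e0 * svet_slice (ab_corr R) false + sgn e1 * svet_slice (ab_corr R) true <= 4.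
Proof.
move=> [psdR trR1].
pose r (i j k l : 'I_2) := R (kron_idx i j) (kron_idx k l).
pose c : C := - (sgn e0 - 'i * sgn e1).
have c_conj : c^* = - (sgn e0 + 'i * sgn e1).
  by rewrite /c rmorphN rmorphB rmorphM /= conjCi !sgn_conj mulNr opprK.
have := psdR.2 (sqrt2 *: ket (kron_idx i0 i0) + c *: ket (kron_idx i1 i1)).
rewrite -/(qform _ _) qform_pair c_conj sqrt2_conj => qR_ge0.
have slice_form z : svet_slice (ab_corr R) z = \sum_x \sum_y sgn (svet_parity x y z) *
    obs_form 'i sqrt2 (r i1 i1 i0 i0) (r i1 i0 i0 i1) (r i0 i1 i1 i0) (r i0 i0 i1 i1) x y.
  rewrite svet_slice_obs; apply: eq_bigr => x _; apply: eq_bigr => y _.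
  by rewrite mxtrace_obs_kron.
rewrite mxtrace4 in trR1.
rewrite !slice_form -subr_ge0 (@svet_slices_sos _ _ _ _ _ _
  (r i0 i0 i0 i0) (r i0 i1 i0 i1) (r i1 i0 i1 i0) (r i1 i1 i1 i1)
  _ _ (sqrCi C) sqrt2_sqr sqrt2_neq0).
rewrite /r trR1 subrr mulr0 addr0 -/c.
by rewrite !addr_ge0 ?mulr_ge0 ?ler0n ?psd_diag_ge0.
Qed.

Lemma svet_value_term (T : bool -> bool -> bool -> bool -> C) (g : bool -> bool -> C) w :
  g true false = 1 - g false false -> g true true = 1 - g false true ->
  svet_value (fun a b c x y z => w * T a b x y * g c z) =
  w * \sum_c0 \sum_c1 (g c0 false * g c1 true) *
        (sgn c0 * svet_slice T false + sgn c1 * svet_slice T true).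
Proof.
move=> g1 g1'.
by rewrite /svet_value /svet_slice /svet_parity !big_bool /= g1 g1' /sgn /=; ring.
Qed.

Lemma svet_value_sum n (F : 'I_n -> corr C) (P : corr C) :
  (forall a b c x y z, P a b c x y z = \sum_l F l a b c x y z) ->
  svet_value P = \sum_l svet_value (F l).
Proof.
move=> defP; rewrite /svet_value.
under eq_bigr => x _ do under eq_bigr => y _ do under eq_bigr => z _ do
  under eq_bigr => a _ do under eq_bigr => b _ do under eq_bigr => c _ do
  rewrite defP mulr_sumr.
under eq_bigr => x _ do under eq_bigr => y _ do under eq_bigr => z _ do
  under eq_bigr => a _ do under eq_bigr => b _ do rewrite exchange_big.
under eq_bigr => x _ do under eq_bigr => y _ do under eq_bigr => z _ do
  under eq_bigr => a _ do rewrite exchange_big.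
under eq_bigr => x _ do under eq_bigr => y _ do under eq_bigr => z _ do
  rewrite exchange_big.
under eq_bigr => x _ do under eq_bigr => y _ do rewrite exchange_big.
under eq_bigr => x _ do rewrite exchange_big.
by rewrite exchange_big.
Qed.

Lemma svet_value_le4 n (w : 'I_n -> C) (rho : 'I_n -> 'M[C]_(2 * 2))
    (g : 'I_n -> bool -> bool -> C) (P : corr C) :
  (forall l, 0 <= w l) -> \sum_l w l = 1 -> (forall l, is_state (rho l)) ->
  (forall l c z, 0 <= g l c z) -> (forall l z, g l false z + g l true z = 1) ->
  (forall a b c x y z, P a b c x y z = \sum_l w l * ab_corr (rho l) a b x y * g l c z) ->
  svet_value P <= 4.
Proof.
move=> w_ge0 w1 rho_state g_ge0 g1 defP.
rewrite (svet_value_sum defP).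
apply: (@le_trans _ _ (\sum_l w l * 4)); last by rewrite -mulr_suml w1 mul1r.
apply: ler_sum => l _.
have gT z : g l true z = 1 - g l false z by rewrite -(g1 l z) addrC addKr.
rewrite svet_value_term ?gT // ler_wpM2l //.
apply: (@le_trans _ _ (\sum_c0 \sum_c1 (g l c0 false * g l c1 true) * 4)).
  apply: ler_sum => c0 _; apply: ler_sum => c1 _.
  by rewrite ler_wpM2l ?mulr_ge0 ?svet_slices_le4.
by rewrite !big_bool /= !gT [leLHS](_ : _ = 4) //; ring.
Qed.

Lemma svet_value_PSvF (V : C) : svet_value (PSvF V) = 4 * sqrt2 * V.
Proof.
have sixteen_neq0 : (16 : C) != 0 by rewrite pnatr_eq0.
by rewrite /svet_value /PSvF /svet_parity !big_bool /sgn /=; field.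
Qed.

End SvetlichnyBound.

Section SeparableModel.
Variable C : numClosedFieldType.
Local Notation sqrt2 := (sqrtC (2 : C)).

Let ket00 : 'cV[C]_(2 * 2) := ket (kron_idx i0 i0).
Let ket11 : 'cV[C]_(2 * 2) := ket (kron_idx i1 i1).

Definition noisy_phi (t u : C) : 'M[C]_(2 * 2) :=
  2^-1 *: (t *: ((ket00 + u *: ket11) *m adjmx (ket00 + u *: ket11))
          + (1 - t) *: (ket00 *m adjmx ket00 + ket11 *m adjmx ket11)).

Lemma mxtrace_kron_noisy_phi t u (A B : 'M[C]_2) :
  \tr (kron A B *m noisy_phi t u) =
  2^-1 * (t * (A i0 i0 * B i0 i0 + u * (A i0 i1 * B i0 i1) + u^* * (A i1 i0 * B i1 i0)
               + u^* * u * (A i1 i1 * B i1 i1))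
          + (1 - t) * (A i0 i0 * B i0 i0 + A i1 i1 * B i1 i1)).
Proof.
rewrite /noisy_phi -!scalemxAr !mxtraceZ !mulmxDr !mxtraceD -!scalemxAr !mxtraceZ.
rewrite mulmxDr mxtraceD -[ket00]scale1r mxtrace_mul_rank1 qform_pair !scale1r.
by rewrite !mxtrace_mul_ket !kronE conjC1; ring.
Qed.

Lemma noisy_phi_state t u : 0 <= t -> t <= 1 -> u * u^* = 1 -> is_state (noisy_phi t u).
Proof.
move=> t_ge0 t_le1 u_unit; split.
  apply: psdZ; first by rewrite invr_ge0 ler0n.
  apply: psdD; apply: psdZ; rewrite ?subr_ge0 //; first exact: psd_mul_adjmx.
  by apply: psdD; apply: psd_mul_adjmx.
rewrite -[X in \tr X]mul1mx -(kron1 C 2 2) mxtrace_kron_noisy_phi !mxE /=.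
have two_neq0 : (2 : C) != 0 by rewrite pnatr_eq0.
by field: u_unit.
Qed.

Definition obs_corr (x y : bool) (u : C) : C :=
  2^-1 * (u * (obsA x i0 i1 * obsB y i0 i1) + u^* * (obsA x i1 i0 * obsB y i1 i0)).

Lemma ab_corr_noisy_phi t u a b x y : u * u^* = 1 ->
  ab_corr (noisy_phi t u) a b x y = 4^-1 * (1 + sgn a * sgn b * t * obs_corr x y u).
Proof.
move=> u_unit; have two_neq0 : (2 : C) != 0 by rewrite pnatr_eq0.
have s_neq0 := sqrt2_neq0 C.
rewrite /ab_corr mxtrace_kron_noisy_phi /obs_corr /MA /MB /proj_of !mxE /=.
by case: x; case: y; rewrite /obsA /obsB /sigma_x /sigma_y !mxE /=; field: u_unit.
Qed.

(* Hidden variable [l : 'I_4] carries the two bits that Charlie outputs for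
   [z = 0] and [z = 1]. *)
Definition charlie_bit (z : bool) (l : 'I_4) : bool := if z then odd l else (1 < l)%N.

Definition charlie_povm (c z : bool) : 'M[C]_4 :=
  \sum_l ((charlie_bit z l == c)%:R : C) *: (ket l *m adjmx (ket l)).

Lemma charlie_povmE c z l : charlie_povm c z l l = (charlie_bit z l == c)%:R.
Proof.
rewrite /charlie_povm summxE (bigD1 l) //= big1 ?addr0.
  by rewrite ket_mul_adjmx !mxE !eqxx mulr1.
by move=> k /negbTE kl; rewrite ket_mul_adjmx !mxE [l == k]eq_sym kl mulr0.
Qed.

Lemma charlie_povm_psd c z : psd (charlie_povm c z).
Proof. by apply: psd_sum => l _; apply: psdZ; [exact: ler0n | exact: psd_mul_adjmx]. Qed.

Lemma charlie_povm_sum z : charlie_povm false z + charlie_povm true z = 1%:M.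
Proof.
rewrite /charlie_povm -big_split mx1_sum_delta /=; apply: eq_bigr => l _.
by rewrite -scalerDl ket_mul_adjmx; case: charlie_bit; rewrite /= ?add0r ?addr0 scale1r.
Qed.

Definition phase (l : 'I_4) : C :=
  sqrt2^-1 * (sgn (charlie_bit false l) - sgn (charlie_bit true l) * 'i).

Lemma phase_conj l : (phase l)^* =
  sqrt2^-1 * (sgn (charlie_bit false l) + sgn (charlie_bit true l) * 'i).
Proof.
rewrite /phase rmorphM rmorphB rmorphM fmorphV /= sqrt2_conj.
by rewrite !sgn_conj conjCi mulrN opprK.
Qed.

Lemma phase_unit l : phase l * (phase l)^* = 1.
Proof.
have s_neq0 := sqrt2_neq0 C; have s2 := sqrt2_sqr C; have i2 := sqrCi C.
by rewrite phase_conj /phase; case: charlie_bit; case: charlie_bit;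
  rewrite /sgn; field: s2 i2.
Qed.

(* Charlie's outputs are arranged so that, for each setting, they single out
   the two phases whose correlator has the sign required by the Svetlichny box. *)
Lemma phase_corr_sum c x y z :
  \sum_l (charlie_bit z l == c)%:R * obs_corr x y (phase l) =
  sgn (c (+) svet_parity x y z).
Proof.
have s_neq0 := sqrt2_neq0 C; have s2 := sqrt2_sqr C; have i2 := sqrCi C.
have two_neq0 : (2 : C) != 0 by rewrite pnatr_eq0.
under eq_bigr do rewrite /obs_corr phase_conj /phase.
rewrite !big_ord_recl big_ord0 /charlie_bit /svet_parity /=.
by case: c; case: x; case: y; case: z;
  rewrite /obsA /obsB /sigma_x /sigma_y !mxE /sgn /=; field: s2 i2.
Qed.

Lemma charlie_count c z : \sum_l ((charlie_bit z l == c)%:R : C) = 2.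
Proof. by case: c; case: z; rewrite !big_ord_recl big_ord0 /=; ring. Qed.

Lemma PSvF_mixture V a b c x y z :
  PSvF V a b c x y z =
  \sum_(l < 4) 4^-1 * ab_corr (noisy_phi (sqrt2 * V) (phase l)) a b x y
                    * \tr (charlie_povm c z *m (ket l *m adjmx (ket l))).
Proof.
have four_neq0 : (4 : C) != 0 by rewrite pnatr_eq0.
under eq_bigr do rewrite ab_corr_noisy_phi ?phase_unit // mxtrace_mul_ket charlie_povmE.
rewrite /PSvF.
have -> : a (+) b (+) c (+) (x && y) (+) (y && z) (+) (x && z) =
          a (+) b (+) (c (+) svet_parity x y z) by rewrite /svet_parity !addbA.
rewrite (sgn_xor C (a (+) b)) (sgn_xor C a) -(phase_corr_sum c x y z).
rewrite -{1}(charlie_count c z).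
by rewrite !big_ord_recl !big_ord0; field.
Qed.

Lemma PSvF_separable_model (V : C) :
  0 < V -> V <= (sqrtC 2)^-1 -> AB_C_separable_model (PSvF V).
Proof.
move=> V_gt0 V_le; have s_gt0 := sqrt2_gt0 C.
exists 4%N, 4%N, (fun _ => 4^-1), (fun l => noisy_phi (sqrt2 * V) (phase l)),
  (fun l => ket l *m adjmx (ket l)), charlie_povm.
split; first by move=> l; rewrite invr_ge0 ler0n.
split.
  have four_neq0 : (4 : C) != 0 by rewrite pnatr_eq0.
  by rewrite sumr_const card_ord -mulr_natr; field.
split.
  move=> l; split; last exact: ket_state.
  apply: noisy_phi_state; last exact: phase_unit.
    by rewrite mulr_ge0 ?ltW.
  by move: V_le; rewrite -(ler_pM2l s_gt0) mulfV // sqrt2_neq0.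
split; first exact: charlie_povm_psd.
split; first exact: charlie_povm_sum.
move=> a b c x y z; rewrite PSvF_mixture mulmx_sumr raddf_sum /=.
apply: eq_bigr => l _.
by rewrite -scalemxAr mxtraceZ mulmx_kron mxtrace_kron mulrA.
Qed.

End SeparableModel.

Section LocalModels.
Variable C : numClosedFieldType.

Lemma LHS_LHV_svet_value_le4 (P : corr C) : LHS_LHV P -> svet_value P <= 4.
Proof.
move=> [n [q [rhoA [rhoB [Pc [q_ge0 [q1 [states [Pc_ge0 [Pc1 defP]]]]]]]]]].
apply: (svet_value_le4 (rho := fun l => kron (rhoA l) (rhoB l)) q_ge0 q1 _ Pc_ge0 Pc1).
  move=> l; have [[psdA trA] [psdB trB]] := states l.
  by split; [exact: psd_kron | rewrite mxtrace_kron trA trB mulr1].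
move=> a b c x y z; rewrite defP; apply: eq_bigr => l _.
by rewrite /ab_corr mulmx_kron mxtrace_kron mulrA.
Qed.

Lemma AB_C_separable_svet_value_le4 (P : corr C) :
  AB_C_separable_model P -> svet_value P <= 4.
Proof.
move=> [d [n [r [rhoAB [rhoC [N [r_ge0 [r1 [states [psdN [N1 defP]]]]]]]]]]].
apply: (svet_value_le4 (rho := rhoAB) (g := fun l c z => \tr (N c z *m rhoC l)) r_ge0 r1).
- by move=> l; case: (states l).
- by move=> l c z; apply: mxtrace_mul_psd_ge0 => //; case: (states l) => _ [].
- move=> l z; rewrite -mxtraceD -mulmxDl N1 mul1mx.
  by case: (states l) => _ [].
move=> a b c x y z; rewrite defP mulmx_sumr raddf_sum /=; apply: eq_bigr => l _.
by rewrite -scalemxAr mxtraceZ mulmx_kron mxtrace_kron mulrA.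
Qed.

End LocalModels.

Theorem proposition2 (C : numClosedFieldType) (V : C) :
  0 < V -> V <= 1 ->
  (tripartite_steering (PSvF V) <-> (sqrtC 2)^-1 < V).
Proof.
move=> V_gt0 _; have s_gt0 := sqrt2_gt0 C.
have svet_gt4 : (sqrtC 2)^-1 < V -> 4 < svet_value (PSvF V).
  rewrite svet_value_PSvF -mulrA ltr_pMr ?ltr0n // => V_gt.
  by rewrite -(ltr_pM2l s_gt0) mulfV ?sqrt2_neq0 in V_gt.
split=> [[_ no_sep] | /svet_gt4 gt4].
  rewrite real_ltNge ?gtr0_real ?invr_gt0 //; apply/negP => V_le.
  exact: no_sep (PSvF_separable_model V_gt0 V_le).
by split=> [/LHS_LHV_svet_value_le4 | /AB_C_separable_svet_value_le4] le4;
  have := lt_le_trans gt4 le4; rewrite ltxx.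
Qed.
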